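(* Assume hypotheses (A) and (B), suppose the routing matrix $P$ has a branching structure (for every $i$ the set $\{j:p_{ji}>0\}$ has at most one element), and let $\rho$ satisfy $(\rho P)_i<\rho_i$ for all $i$. Then for every $$0<\varepsilon<\min_{1\le i\le d}\frac{\rho_i}{G_{ii}}\Bigl(\frac{\mu_i}{\nu_i}-1\Bigr),$$ the function $h_{\varepsilon,\rho}(x)=\sum_{i=1}^d\prod_{j=1}^d(1+\varepsilon G_{ji}/\rho_i)^{x^j}$ satisfies $$\limsup_{|x|\to\infty}\frac{\mathcal{L}h_{\varepsilon,\rho}(x)}{h_{\varepsilon,\rho}(x)}=-\varepsilon\min_{1\le i\le d}\Bigl(\frac{\mu_i}{\rho_i+\varepsilon G_{ii}}-\frac{\nu_i}{\rho_i}\Bigr)<0.$$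
   Context: Jackson network with $d$ queues: arrival rates $\lambda_i\ge0$, service rates $\mu_i>0$, routing matrix $P=(p_{ij})_{i,j=1}^d$ nonnegative with $p_{ii}=0$, $\sum_jp_{ij}\le1$, $p_{i0}=1-\sum_jp_{ij}$. With $\epsilon^i$ the unit vectors, $q(\epsilon^i)=\lambda_i$, $q(-\epsilon^i)=\mu_ip_{i0}$, $q(\epsilon^j-\epsilon^i)=\mu_ip_{ij}$, $q=0$ otherwise; the process on $\mathbb{Z}_+^d$ has generator $\mathcal{L}f(y)=\sum_{z\in\mathbb{Z}_+^d}q(z-y)(f(z)-f(y))$. Hypothesis (A): $(q(x-y))_{x,y\in\mathbb{Z}^d}$ irreducible (equivalently spectral radius of $P$ $<1$ and for every $i$ some $\lambda_jp^{(n)}_{ji}>0$); the traffic equations $\nu_j=\lambda_j+\sum_i\nu_ip_{ij}$ have a unique solution with $\nu_i>0$. Hypothesis (B): $\nu_i<\mu_i$ for all $i$. $G=(I-P)^{-1}$, $(\rho P)_i=\sum_j\rho_jp_{ji}$. *)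

From HB Require Import structures.
From mathcomp Require Import all_boot all_order all_algebra.
From mathcomp Require Import all_classical all_reals all_analysis.
Set Implicit Arguments. Unset Strict Implicit. Unset Printing Implicit Defensive.
Import Order.TTheory GRing.Theory Num.Theory.
Local Open Scope classical_set_scope.
Local Open Scope ring_scope.

Definition Zvec (d : nat) := {ffun 'I_d -> int}.

Definition uvec d (i : 'I_d) : Zvec d := [ffun k => ((k == i) : nat)%:Z].

Definition nonneg d (x : Zvec d) : bool := [forall k, 0 <= x k].

Definition norm1 d (x : Zvec d) : nat := (\sum_(k < d) `|x k|)%N.

Section Jackson.
Variables (R : realType) (d : nat).
Variables (lam mu : 'I_d -> R) (P : 'M[R]_d).

Definition p0 (i : 'I_d) : R := 1 - \sum_(j < d) P i j.

(* the jump rates q(z), z in Z^d: q(e^i) = lam_i, q(-e^i) = mu_i p_{i0},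
   q(e^j - e^i) = mu_i p_{ij}, q = 0 otherwise.  (The listed vectors are
   pairwise distinct for i <> j, and p_{ii} = 0, so this sum is exactly the
   case definition.) *)
Definition qrate (z : Zvec d) : R :=
  \sum_(i < d) lam i * (z == uvec i)%:R
  + \sum_(i < d) mu i * p0 i * (z == - uvec i)%:R
  + \sum_(i < d) \sum_(j < d) mu i * P i j * (z == uvec j - uvec i)%:R.

(* Generator L f (y) = sum_{z in Z_+^d} q(z - y) (f z - f y).
   Since q vanishes outside {-1,0,1}^d, the sum is over z = y + w - 1 with
   w in {0,1,2}^d, restricted to z in Z_+^d. *)
Definition gen (f : Zvec d -> R) (y : Zvec d) : R :=
  \sum_(w : {ffun 'I_d -> 'I_3})
    let z : Zvec d := [ffun k => y k + (w k : nat)%:Z - 1] in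
    if nonneg z then qrate (z - y) * (f z - f y) else 0.

Definition irreducibleA : Prop :=
  forall x y : Zvec d, exists s : seq (Zvec d),
    path (fun a b : Zvec d => 0 < qrate (b - a)) x s && (last x s == y).

End Jackson.

Definition Gmat (R : realType) d (P : 'M[R]_d) : 'M[R]_d := invmx (1%:M - P).

Definition h_fun (R : realType) d (G : 'M[R]_d) (eps : R) (rho : 'I_d -> R)
  (x : Zvec d) : R :=
  \sum_(i < d) \prod_(j < d) (1 + eps * G j i / rho i) ^ (x j).

Definition limsup_infty (R : realType) d (f : Zvec d -> R) : \bar R :=
  ereal_inf [set ereal_sup [set (f x)%:E | x in [set x | nonneg x /\ (N <= norm1 x)%N]]
            | N in [set: nat]].

(* minimum over i in {1..d} (in \bar R; finite when d >= 1) *)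
Definition emin (R : realType) d (F : 'I_d -> R) : \bar R :=
  \big[mine/+oo%E]_(i < d) (F i)%:E.

(* The hypotheses on P and (A) give a minimum principle for P-superharmonic
   functions, hence I - P is invertible, G = (I - P)^-1 >= 0, G_ii >= 1, and
   rho = (rho (I - P)) G > 0.  Each summand
   hterm k x = prod_j (1 + eps G_jk / rho_k)^(x^j) of h is an eigenfunction of
   the generator off the face x^k = 0, because G = I + P G: there
   L hterm_k / hterm_k is the interior rate
   eps nu_k / rho_k - eps mu_k / (rho_k + eps G_kk), and on the face it is
   eps nu_k / rho_k.  So L h / h is an average of these rates with weights
   hterm_k / h.  With the branching structure the routes form a forest along
   which G_lk / rho_k strictly increases from k towards each ancestor l.  Hence
   hterm_k is negligible against h on the face x^k = 0 as |x| -> oo, while on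
   the axis x = n e_j the term hterm_j dominates; the limsup is therefore the
   largest interior rate, and the bound on eps makes it negative. *)

From HB Require Import structures.
From mathcomp Require Import all_boot all_order all_algebra.
From mathcomp Require Import all_classical all_reals all_analysis.
From mathcomp Require Import ring lra zify.
Set Implicit Arguments.
Unset Strict Implicit.
Unset Printing Implicit Defensive.
Import Order.TTheory GRing.Theory Num.Theory.
Local Open Scope classical_set_scope.
Local Open Scope ring_scope.

Lemma ex_argmax (R : realDomainType) (I : finType) (i0 : I) (F : I -> R) :
  exists j, forall i, F i <= F j.
Proof.
by case: (arg_maxP (i0 := i0) (P := predT) F isT) => j _ Fj; exists j => i; apply: Fj.
Qed.

Lemma ex_argmin (R : realDomainType) (I : finType) (i0 : I) (F : I -> R) :
  exists j, forall i, F j <= F i.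
Proof.
by case: (arg_minP (i0 := i0) (P := predT) F isT) => j _ Fj; exists j => i; apply: Fj.
Qed.

Lemma sumr_ge_term (R : numDomainType) (I : finType) (F : I -> R) i :
  (forall j, 0 <= F j) -> F i <= \sum_j F j.
Proof. by move=> F_ge0; rewrite (bigD1 i) //= lerDl sumr_ge0. Qed.

Lemma expr_near_le (R : realType) (t e : R) : `|t| < 1 -> 0 < e ->
  \forall n \near \oo, t ^+ n <= e.
Proof.
move=> t_lt1 e_gt0; near=> n; apply: le_trans (ler_norm _) _.
by near: n; apply: cvgr0_norm_le e_gt0; exact: cvg_expr.
Unshelve. all: by end_near. Qed.

Lemma exprn_near_ge (R : realType) (q C : R) : 1 < q ->
  \forall n \near \oo, C <= q ^+ n.
Proof.
move=> q_gt1; have q_gt0 : 0 < q by apply: lt_trans q_gt1.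
have C1_gt0 : 0 < `|C| + 1 by rewrite ltr_wpDl.
have qV_lt1 : `|q^-1| < 1 by rewrite gtr0_norm ?invr_gt0 // invf_lt1.
near=> n; suff : `|C| + 1 <= q ^+ n by have := ler_norm C; lra.
rewrite -lef_pV2 ?posrE ?exprn_gt0 // -exprVn.
by near: n; apply: expr_near_le; rewrite ?invr_gt0.
Unshelve. all: by end_near. Qed.

Lemma sum_mul_le_avg (R : realFieldType) (I : finType) (f c : I -> R) (M e : R) :
  (forall k, f k * (c k - M) <= e * \sum_j f j) ->
  \sum_k f k * c k <= (M + #|I|%:R * e) * \sum_k f k.
Proof.
move=> fc_le.
have : \sum_k f k * (c k - M) <= \sum_(k : I) e * \sum_j f j.
  by apply: ler_sum => k _; exact: fc_le.
rewrite sumr_const (eq_bigr (fun k => f k * c k - M * f k)) => [|k _]; last by ring.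
rewrite sumrB -mulr_sumr -mulr_natl; lra.
Qed.

Lemma avg_le_sum_mul (R : realFieldType) (I : finType) (f c : I -> R) (m e : R) :
  (forall k, - (e * \sum_j f j) <= f k * (c k - m)) ->
  (m - #|I|%:R * e) * \sum_k f k <= \sum_k f k * c k.
Proof.
move=> fc_ge.
have : \sum_(k : I) - (e * \sum_j f j) <= \sum_k f k * (c k - m).
  by apply: ler_sum => k _; exact: fc_ge.
rewrite sumr_const -mulr_natl.
rewrite [X in _ <= X](eq_bigr (fun k => f k * c k - m * f k)) => [|k _]; last by ring.
rewrite sumrB -mulr_sumr; lra.
Qed.

Lemma emin_le (R : realType) d (g : 'I_d -> R) k : (emin g <= (g k)%:E)%E.
Proof. by rewrite /emin (bigD1 k) //= ge_min lexx. Qed.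

Lemma emin_argmin (R : realType) d (g : 'I_d -> R) j :
  (forall k, g j <= g k) -> emin g = (g j)%:E.
Proof.
move=> gj_min; apply/le_anti; rewrite emin_le /=.
apply: (big_ind (fun x => (g j)%:E <= x)%E) => // [|x y gx gy|k _].
- exact: leey.
- by rewrite le_min gx gy.
- by rewrite lee_fin.
Qed.

Lemma limsup_infty_eq (R : realType) d (f : Zvec d -> R) (c : R) :
  (forall e, 0 < e -> exists N, forall x, nonneg x -> (N <= norm1 x)%N -> f x <= c + e) ->
  (forall e, 0 < e -> forall N, exists x, [/\ nonneg x, (N <= norm1 x)%N & c - e <= f x]) ->
  limsup_infty f = c%:E.
Proof.
move=> f_le f_ge; apply/le_anti/andP; split.
- apply/lee_addgt0Pr => e e_gt0; have [N fN] := f_le e e_gt0.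
  apply: ge_ereal_inf; exists (ereal_sup [set (f x)%:E | x in
    [set x | nonneg x /\ (N <= norm1 x)%N]]); first by exists N.
  by apply/ereal_supP => _ [x [x_ge0 Nx] <-]; rewrite lee_fin fN.
- apply/ereal_infP => _ [N _ <-]; apply/lee_subgt0Pr => e e_gt0.
  have [x [x_ge0 Nx fx]] := f_ge e e_gt0 N.
  by apply: le_ereal_sup_tmp; exists (f x)%:E; [exists x | rewrite -EFinB lee_fin].
Qed.

Lemma ex_uniform_ratio (R : realFieldType) (I : finType) (i0 : I) (S : pred I) (f g : I -> R) :
  (forall l, 0 <= f l) -> (forall l, 0 < g l) -> (forall l, S l -> f l < g l) ->
  exists t, [/\ 0 <= t, t < 1 & forall l, S l -> f l <= t * g l].
Proof.
move=> f_ge0 g_gt0 f_lt_g.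
pose r l := if S l then f l / g l else 0.
have r_ge0 l : 0 <= r l by rewrite /r; case: ifP => // _; rewrite divr_ge0 // ltW.
have [lm r_max] := ex_argmax i0 r.
exists (r lm); split => // [|l Sl].
  by rewrite /r; case: ifP => [S_lm|_]; rewrite ?ltr01 // ltr_pdivrMr // mul1r f_lt_g.
by rewrite -ler_pdivrMr //; have := r_max l; rewrite /r Sl.
Qed.

Lemma nonneg_add_uvec d (y : Zvec d) i : nonneg y -> nonneg (y + uvec i).
Proof.
move/forallP=> y_ge0; apply/forallP => k; rewrite !ffunE.
by have := y_ge0 k; case: (k == i) => /=; lia.
Qed.

Lemma nonneg_sub_uvec d (y : Zvec d) i : nonneg y -> nonneg (y + - uvec i) = (0 < y i).
Proof.
move/forallP=> y_ge0; apply/forallP/idP => [/(_ i)|yi_gt0 k]; rewrite !ffunE ?eqxx /=.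
  lia.
by have := y_ge0 k; case: eqP => [->|_] /=; lia.
Qed.

Lemma nonneg_move_uvec d (y : Zvec d) i j : nonneg y -> j != i ->
  nonneg (y + (uvec j - uvec i)) = (0 < y i).
Proof.
move/forallP=> y_ge0 ji; apply/forallP/idP => [/(_ i)|yi_gt0 k]; rewrite !ffunE ?eqxx /=.
  by rewrite eq_sym (negbTE ji) /=; lia.
by have := y_ge0 k; case: eqP => [->|_]; case: eqP => [->|_] /=; lia.
Qed.

Definition axis d (j : 'I_d) (n : nat) : Zvec d := [ffun k => if k == j then n%:Z else 0].

Lemma nonneg_axis d (j : 'I_d) n : nonneg (axis j n).
Proof. by apply/forallP => k; rewrite ffunE; case: ifP. Qed.

Lemma axis_off d (j k : 'I_d) n : k != j -> axis j n k = 0.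
Proof. by rewrite ffunE => /negbTE ->. Qed.

Lemma norm1_axis d (j : 'I_d) n : norm1 (axis j n) = n.
Proof.
rewrite /norm1 (bigD1 j) //= big1 ?addn0 => [|k /axis_off -> //].
by rewrite ffunE eqxx.
Qed.

Section Jackson.
Variables (R : realType) (d : nat) (lam mu : 'I_d -> R) (P : 'M[R]_d).
Local Notation G := (Gmat P).

Definition jump_target (y : Zvec d) (w : {ffun 'I_d -> 'I_3}) : Zvec d :=
  [ffun k => y k + (w k : nat)%:Z - 1].

Lemma sum_jump_target (y v : Zvec d) (F : Zvec d -> R) : (forall k, -1 <= v k <= 1) ->
  \sum_w (nonneg (jump_target y w))%:R * ((jump_target y w - y == v)%:R * F (jump_target y w))
  = (nonneg (y + v))%:R * F (y + v).
Proof.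
move=> v_small.
pose w0 : {ffun 'I_d -> 'I_3} := [ffun k => inord (absz (v k + 1))].
have w0E k : (w0 k : nat)%:Z = v k + 1.
  by rewrite ffunE inordK; have := v_small k; lia.
have target_w0 : jump_target y w0 = y + v.
  by apply/ffunP => k; have := w0E k; rewrite !ffunE => ->; ring.
have jump_v w : (jump_target y w - y == v) = (w == w0).
  apply/eqP/eqP => [yv|->]; last by rewrite target_w0 addrC addKr.
  apply/ffunP => k; apply: val_inj => /=.
  have /ffunP/(_ k) := yv; rewrite !ffunE => yv_k.
  suff : Posz (w k) = Posz (w0 k) by rewrite ffunE; case.
  by rewrite w0E -yv_k; ring.
under eq_bigr do rewrite jump_v.
rewrite (bigD1 w0) //= big1 ?addr0 => [|w /negbTE ->]; first by rewrite eqxx mul1r target_w0.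
by rewrite mul0r mulr0.
Qed.

Lemma genE (f : Zvec d -> R) y :
  gen lam mu P f y =
    \sum_i lam i * ((nonneg (y + uvec i))%:R * (f (y + uvec i) - f y))
  + \sum_i mu i * p0 P i * ((nonneg (y + - uvec i))%:R * (f (y + - uvec i) - f y))
  + \sum_i \sum_j mu i * P i j *
      ((nonneg (y + (uvec j - uvec i)))%:R * (f (y + (uvec j - uvec i)) - f y)).
Proof.
have uvec_small (i k : 'I_d) : -1 <= uvec i k <= 1 by rewrite ffunE; case: (k == i) => /=; lia.
have uvecN_small (i k : 'I_d) : -1 <= (- uvec i) k <= 1.
  by rewrite !ffunE; case: (k == i) => /=; lia.
have uvecB_small (i j k : 'I_d) : -1 <= (uvec j - uvec i) k <= 1.
  by rewrite !ffunE; case: (k == i); case: (k == j) => /=; lia.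
have -> : gen lam mu P f y = \sum_w (nonneg (jump_target y w))%:R *
    (qrate lam mu P (jump_target y w - y) * (f (jump_target y w) - f y)).
  by apply: eq_bigr => w _ /=; case: ifP; rewrite ?mul1r ?mul0r.
rewrite /qrate; under eq_bigr do rewrite 2!mulrDl 2!mulrDr.
rewrite !big_split /=; congr (_ + _ + _).
- under eq_bigr do rewrite mulr_suml mulr_sumr.
  rewrite exchange_big /=; apply: eq_bigr => i _.
  rewrite -(sum_jump_target _ (fun z => f z - f y) (uvec_small i)) mulr_sumr.
  by apply: eq_bigr => w _; ring.
- under eq_bigr do rewrite mulr_suml mulr_sumr.
  rewrite exchange_big /=; apply: eq_bigr => i _.
  rewrite -(sum_jump_target _ (fun z => f z - f y) (uvecN_small i)) mulr_sumr.
  by apply: eq_bigr => w _; ring.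
- under eq_bigr do rewrite mulr_suml mulr_sumr.
  rewrite exchange_big /=; apply: eq_bigr => i _.
  under eq_bigr do rewrite mulr_suml mulr_sumr.
  rewrite exchange_big /=; apply: eq_bigr => j _.
  rewrite -(sum_jump_target _ (fun z => f z - f y) (uvecB_small i j)) mulr_sumr.
  by apply: eq_bigr => w _; ring.
Qed.

Lemma gen_sum (I : finType) (F : I -> Zvec d -> R) y :
  gen lam mu P (fun x => \sum_k F k x) y = \sum_k gen lam mu P (F k) y.
Proof.
rewrite /gen exchange_big /=; apply: eq_bigr => w _ /=.
case: ifP => _; last by rewrite big1.
by rewrite -sumrB mulr_sumr.
Qed.

Hypothesis P_ge0 : forall i j, 0 <= P i j.
Hypothesis P_sum_le1 : forall i, \sum_(j < d) P i j <= 1.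
Hypothesis irrP : irreducibleA lam mu P.

Lemma P_eq0 j k : ~~ (0 < P j k) -> P j k = 0.
Proof. by rewrite -leNgt => Pjk_le0; apply/eqP; rewrite eq_le Pjk_le0 P_ge0. Qed.

Definition mass (T : pred 'I_d) (v : Zvec d) : int := \sum_k (T k)%:Z * v k.

Lemma massB T (a b : Zvec d) : mass T (a - b) = mass T a - mass T b.
Proof. by rewrite /mass -sumrB; apply: eq_bigr => k _; rewrite !ffunE; ring. Qed.

Lemma massN T (a : Zvec d) : mass T (- a) = - mass T a.
Proof. by rewrite /mass -sumrN; apply: eq_bigr => k _; rewrite !ffunE; ring. Qed.

Lemma mass0 T : mass T 0 = 0.
Proof. by rewrite /mass big1 // => k _; rewrite ffunE mulr0. Qed.

Lemma mass_uvec T i : mass T (uvec i) = (T i)%:Z.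
Proof.
rewrite /mass (bigD1 i) //= big1 ?addr0 => [|k /negbTE ki]; first by rewrite ffunE eqxx mulr1.
by rewrite ffunE ki mulr0.
Qed.

Definition closed_class (T : pred 'I_d) :=
  (forall k, T k -> p0 P k = 0) /\ (forall k j, T k -> 0 < P k j -> T j).

Lemma qrate_mass_ge0 T v : closed_class T -> 0 < qrate lam mu P v -> 0 <= mass T v.
Proof.
move=> [T_p0 T_closed] q_gt0; rewrite leNgt; apply/negP => mass_lt0.
suff : qrate lam mu P v <= 0 by rewrite leNgt q_gt0.
rewrite /qrate -!addrA; apply: ler_wnDl; first apply: sumr_le0 => i _.
  case: eqP => [v_i|_]; last by rewrite mulr0.
  by move: mass_lt0; rewrite v_i mass_uvec; case: (T i).
apply: ler_wnDl; first apply: sumr_le0 => i _.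
  case: eqP => [v_i|_]; last by rewrite mulr0.
  move: mass_lt0; rewrite v_i massN mass_uvec; case Ti: (T i) => // _.
  by rewrite T_p0 // mulr0 mul0r.
apply: sumr_le0 => i _; apply: sumr_le0 => j _.
case: eqP => [v_ij|_]; last by rewrite mulr0.
move: mass_lt0; rewrite v_ij massB !mass_uvec.
case Ti: (T i); case Tj: (T j) => // _.
have : ~~ (0 < P i j) by apply/negP => /(T_closed _ _ Ti); rewrite Tj.
by move/P_eq0->; rewrite mulr0 mul0r.
Qed.

Lemma path_mass_le T s x : closed_class T ->
  path (fun a b : Zvec d => 0 < qrate lam mu P (b - a)) x s ->
  mass T x <= mass T (last x s).
Proof.
move=> T_closed; elim: s x => [|y s IHs] x //= /andP[xy ys].
apply: le_trans (IHs _ ys).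
by have := qrate_mass_ge0 T_closed xy; rewrite massB subr_ge0.
Qed.

Definition superharmonic (u : 'I_d -> R) := forall k, \sum_j P k j * u j <= u k.

Lemma superharmonic_min_closed u k : superharmonic u ->
  (forall j, u k <= u j) -> u k < 0 ->
  p0 P k = 0 /\ (forall j, 0 < P k j -> u j = u k).
Proof.
move=> u_sh uk_min uk_lt0.
have terms_ge0 j : 0 <= P k j * (u j - u k) by rewrite mulr_ge0 ?subr_ge0.
have split_sum : \sum_j P k j * (u j - u k)
    = \sum_j P k j * u j - u k * \sum_j P k j.
  by rewrite mulr_sumr -sumrB; apply: eq_bigr => j _; ring.
have S_ge0 : 0 <= \sum_j P k j * (u j - u k) by apply: sumr_ge0 => j _.
have := u_sh k; have := P_sum_le1 k; rewrite split_sum in S_ge0 => S_le1 sh_k.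
have p0k : u k * p0 P k = 0.
  by apply/eqP; rewrite /p0 eq_le; apply/andP; split; nra.
split; first by apply: (mulfI (ltr0_neq0 uk_lt0)); rewrite mulr0.
move=> j Pkj_gt0; apply/eqP; rewrite -subr_eq0.
have S0 : \sum_j P k j * (u j - u k) = 0.
  by move: p0k; rewrite split_sum /p0; nra.
have /eqP := psumr_eq0P (fun j _ => terms_ge0 j) S0 (i := j) isT.
by rewrite mulf_eq0 (gt_eqF Pkj_gt0).
Qed.

(* Minimum principle: the minimizers of a negative superharmonic [u] form a
   class that no jump of positive rate leaves, whereas (A) provides a path from
   [0] to [- uvec t]. *)
Lemma superharmonic_ge0 u : superharmonic u -> forall k, 0 <= u k.
Proof.
move=> u_sh k; rewrite leNgt; apply/negP => uk_lt0.
have [t ut_min] := ex_argmin k u.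
have ut_lt0 : u t < 0 by apply: le_lt_trans (ut_min k) uk_lt0.
pose T := fun i => u i == u t.
have T_closed : closed_class T.
  have T_prop i : T i -> p0 P i = 0 /\ (forall j, 0 < P i j -> u j = u i).
    by move/eqP=> ui; apply: superharmonic_min_closed; rewrite ?ui.
  split=> [i /T_prop[] //|i j Ti /(T_prop i Ti).2 uj].
  by rewrite /T uj.
have [s /andP[s_path /eqP s_last]] := irrP 0 (- uvec t).
have := path_mass_le T_closed s_path.
by rewrite s_last mass0 massN mass_uvec /T eqxx.
Qed.

Lemma unitmx_IsubP : (1%:M - P) \in unitmx.
Proof.
rewrite unitmxE unitfE -det_tr; apply/negP => /det0P [v v_neq0 vP].
have IPv : (1%:M - P) *m v^T = 0 by rewrite -[_ *m _]trmxK trmx_mul trmxK vP trmx0.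
have v_fix k : \sum_j P k j * v 0 j = v 0 k.
  have /colP/(_ k) := IPv; rewrite mulmxBl mul1mx !mxE.
  move/eqP; rewrite subr_eq0 => /eqP ->.
  by apply: eq_bigr => j _; rewrite mxE.
have sh_v : superharmonic (fun k => v 0 k) by move=> k; rewrite v_fix.
have sh_vN : superharmonic (fun k => - v 0 k).
  move=> k; rewrite -(v_fix k) -sumrN le_eqVlt; apply/orP; left.
  by apply/eqP/eq_bigr => j _; rewrite mulrN.
apply/negP: v_neq0; rewrite negbK; apply/eqP/rowP => k; rewrite mxE.
have := superharmonic_ge0 sh_v k; have := superharmonic_ge0 sh_vN k; lra.
Qed.

Lemma Gmat_unroll_l k i : G k i = (k == i)%:R + \sum_j P k j * G j i.
Proof.
have /matrixP/(_ k i) := mulmxV unitmx_IsubP.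
by rewrite mulmxBl mul1mx !mxE => <-; rewrite subrK.
Qed.

Lemma Gmat_unroll_r k i : G k i = (k == i)%:R + \sum_j G k j * P j i.
Proof.
have /matrixP/(_ k i) := mulVmx unitmx_IsubP.
by rewrite mulmxBr mulmx1 !mxE => <-; rewrite subrK.
Qed.

Lemma Gmat_ge0 k i : 0 <= G k i.
Proof.
apply: (@superharmonic_ge0 (fun k => G k i)) => {}k.
by rewrite [leRHS]Gmat_unroll_l lerDr.
Qed.

Lemma Gmat_diag_ge1 i : 1 <= G i i.
Proof.
rewrite Gmat_unroll_r eqxx lerDl; apply: sumr_ge0 => j _.
by rewrite mulr_ge0 ?Gmat_ge0.
Qed.

Lemma sum_IsubP_Gmat (w : 'I_d -> R) i :
  \sum_k (w k - \sum_j w j * P j k) * G k i = w i.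
Proof.
have wPG : \sum_k (\sum_j w j * P j k) * G k i = \sum_j w j * (G j i - (j == i)%:R).
  under eq_bigr do rewrite mulr_suml.
  rewrite exchange_big /=; apply: eq_bigr => j _.
  rewrite [G j i]Gmat_unroll_l addrC addKr big_distrr /=.
  by apply: eq_bigr => k _; rewrite mulrA.
under eq_bigr do rewrite mulrBl.
rewrite sumrB wPG; under [X in _ - X]eq_bigr do rewrite mulrBr.
rewrite sumrB opprB addrC subrK (bigD1 i) //= big1 ?addr0 => [|k /negbTE ->].
  by rewrite eqxx mulr1.
by rewrite mulr0.
Qed.

Variable rho : 'I_d -> R.
Hypothesis rhoP_lt : forall i, \sum_j rho j * P j i < rho i.

Lemma rho_gt0 i : 0 < rho i.
Proof.
rewrite -(sum_IsubP_Gmat rho i).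
have rhoP_gt0 k : 0 < rho k - \sum_j rho j * P j k by rewrite subr_gt0.
apply: lt_le_trans (sumr_ge_term i _) => [|k].
  by rewrite mulr_gt0 // (lt_le_trans ltr01 (Gmat_diag_ge1 i)).
by rewrite mulr_ge0 ?Gmat_ge0 ?ltW.
Qed.

Hypothesis branching : forall i j k, 0 < P j i -> 0 < P k i -> j = k.

Lemma Gmat_parent p k l : 0 < P p k -> l != k -> G l k = G l p * P p k.
Proof.
move=> Ppk_gt0 lk; rewrite Gmat_unroll_r (negbTE lk) add0r (bigD1 p) //=.
rewrite big1 ?addr0 // => m mp; rewrite P_eq0 ?mulr0 //.
by apply/negP => /(branching Ppk_gt0) pm; rewrite pm eqxx in mp.
Qed.

Lemma Gmat_orphan k l : (forall m, ~~ (0 < P m k)) -> l != k -> G l k = 0.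
Proof.
move=> k_orphan lk; rewrite Gmat_unroll_r (negbTE lk) add0r big1 // => m _.
by rewrite P_eq0 ?mulr0.
Qed.

Lemma rho_parent_lt p k : 0 < P p k -> rho p * P p k < rho k.
Proof.
move=> Ppk_gt0; apply: le_lt_trans (rhoP_lt k).
apply: (sumr_ge_term p (F := fun j => rho j * P j k)) => j.
by rewrite mulr_ge0 // ltW ?rho_gt0.
Qed.

(* By branching, [G l k = G l p * P p k] for the unique parent [p] of [k], and
   [rho p * P p k < rho k]. *)
Lemma Gmat_ratio_lt_parent l k : l != k -> 0 < G l k ->
  exists2 p, 0 < P p k & G l k / rho k < G l p / rho p.
Proof.
move=> lk Glk_gt0; case: (pickP (fun m => 0 < P m k)) => [p Ppk_gt0|k_orphan]; last first.
  by move: Glk_gt0; rewrite Gmat_orphan ?ltxx // => m; rewrite k_orphan.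
exists p => //; have Glk := Gmat_parent Ppk_gt0 lk.
have Glp_gt0 : 0 < G l p by move: Glk_gt0; rewrite Glk pmulr_lgt0.
rewrite Glk ltr_pdivrMr ?rho_gt0 // mulrAC ltr_pdivlMr ?rho_gt0 //.
by rewrite -mulrA ltr_pM2l // mulrC rho_parent_lt.
Qed.

Lemma Gmat_ratio_le_diag j k : G j k / rho k <= G j j / rho j.
Proof.
have [k0 k0_max] := ex_argmax j (fun k => G j k / rho k).
apply: le_trans (k0_max k) _; case: (eqVneq j k0) => [<- //|jk0].
case: (eqVneq (G j k0) 0) => [->|Gjk0_neq0].
  by rewrite mul0r divr_ge0 ?Gmat_ge0 // ltW ?rho_gt0.
have Gjk0_gt0 : 0 < G j k0 by rewrite lt_def Gjk0_neq0 Gmat_ge0.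
have [p _] := Gmat_ratio_lt_parent jk0 Gjk0_gt0.
by move/lt_le_trans/(_ (k0_max p)); rewrite ltxx.
Qed.

Lemma Gmat_ratio_lt_diag j k : k != j -> G j k / rho k < G j j / rho j.
Proof.
move=> kj; case: (eqVneq (G j k) 0) => [->|Gjk_neq0].
  by rewrite mul0r divr_gt0 ?rho_gt0 // (lt_le_trans ltr01 (Gmat_diag_ge1 j)).
have Gjk_gt0 : 0 < G j k by rewrite lt_def Gjk_neq0 Gmat_ge0.
have [|p _ ratio_lt] := @Gmat_ratio_lt_parent j k _ Gjk_gt0; first by rewrite eq_sym.
exact: lt_le_trans ratio_lt (Gmat_ratio_le_diag j p).
Qed.

Hypothesis P_diag0 : forall i, P i i = 0.
Variables (nu : 'I_d -> R) (eps : R).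
Hypothesis nu_traffic : forall j, nu j = lam j + \sum_i nu i * P i j.
Hypothesis eps_gt0 : 0 < eps.

Lemma nu_Gmat k : nu k = \sum_i lam i * G i k.
Proof.
rewrite -{1}(sum_IsubP_Gmat nu k); apply: eq_bigr => i _.
by rewrite [in nu i]nu_traffic addrK.
Qed.

Definition hbase (l k : 'I_d) : R := 1 + eps * G l k / rho k.

Definition hterm (k : 'I_d) (x : Zvec d) : R := \prod_j hbase j k ^ x j.

Local Notation h := (h_fun G eps rho).

Lemma h_funE x : h x = \sum_k hterm k x.
Proof. by []. Qed.

Lemma hbase_ge1 l k : 1 <= hbase l k.
Proof. by rewrite lerDl divr_ge0 ?mulr_ge0 ?Gmat_ge0 // ltW ?rho_gt0. Qed.

Lemma hbase_gt0 l k : 0 < hbase l k.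
Proof. exact: lt_le_trans ltr01 (hbase_ge1 l k). Qed.

Lemma hterm_shift k y v : hterm k (y + v) = hterm k y * \prod_j hbase j k ^ v j.
Proof.
rewrite /hterm -big_split; apply: eq_bigr => j _ /=.
by rewrite ffunE expfzDr // gt_eqF ?hbase_gt0.
Qed.

Lemma prod_hbase_uvec k i : \prod_j hbase j k ^ uvec i j = hbase i k.
Proof.
rewrite (bigD1 i) //= big1 ?mulr1 => [|j /negbTE ji]; first by rewrite ffunE eqxx expr1z.
by rewrite ffunE ji expr0z.
Qed.

Lemma prod_hbase_uvecN k i : \prod_j hbase j k ^ (- uvec i) j = (hbase i k)^-1.
Proof. by under eq_bigr do rewrite ffunE -invr_expz; rewrite prodfV prod_hbase_uvec. Qed.

Lemma prod_hbase_uvecB k i j :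
  \prod_l hbase l k ^ (uvec j - uvec i) l = hbase j k / hbase i k.
Proof.
under eq_bigr do rewrite ffunE expfzDr ?gt_eqF ?hbase_gt0 //.
rewrite big_split /= prod_hbase_uvec -prod_hbase_uvecN.
by under [X in _ * X]eq_bigr do rewrite ffunE.
Qed.

Lemma sum_P_hbase i k :
  \sum_j P i j * hbase j k = \sum_j P i j + hbase i k - 1 - eps * (i == k)%:R / rho k.
Proof.
have -> : \sum_j P i j * hbase j k = \sum_j P i j + eps / rho k * \sum_j P i j * G j k.
  by rewrite mulr_sumr -big_split; apply: eq_bigr => j _ /=; rewrite /hbase; ring.
by rewrite /hbase (Gmat_unroll_l i k); ring.
Qed.

Lemma departure_hbase i k :
  p0 P i * ((hbase i k)^-1 - 1) + \sum_j P i j * (hbase j k / hbase i k - 1)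
  = - (eps * (i == k)%:R / rho k) / hbase i k.
Proof.
have hik_neq0 := gt_eqF (hbase_gt0 i k).
have -> : \sum_j P i j * (hbase j k / hbase i k - 1)
    = (\sum_j P i j * hbase j k) / hbase i k - \sum_j P i j.
  by rewrite mulr_suml -sumrB; apply: eq_bigr => j _; ring.
by rewrite sum_P_hbase /p0; field; rewrite hik_neq0 gt_eqF ?rho_gt0.
Qed.

Definition face_rate k := eps * nu k / rho k.

Definition interior_rate k := face_rate k - eps * mu k / (rho k + eps * G k k).

Definition hterm_rate k (y : Zvec d) := if 0 < y k then interior_rate k else face_rate k.

Lemma gen_hterm k y : nonneg y -> gen lam mu P (hterm k) y = hterm k y * hterm_rate k y.
Proof.
move=> y_ge0; rewrite genE.
have arrivals : \sum_i lam i * ((nonneg (y + uvec i))%:R * (hterm k (y + uvec i) - hterm k y))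
    = hterm k y * face_rate k.
  rewrite /face_rate nu_Gmat mulr_sumr mulr_suml mulr_sumr; apply: eq_bigr => i _.
  by rewrite nonneg_add_uvec // hterm_shift prod_hbase_uvec /hbase /=; ring.
have departures i :
    mu i * p0 P i * ((nonneg (y + - uvec i))%:R * (hterm k (y + - uvec i) - hterm k y))
  + \sum_j mu i * P i j * ((nonneg (y + (uvec j - uvec i)))%:R
        * (hterm k (y + (uvec j - uvec i)) - hterm k y))
  = ((0 < y i)%R : bool)%:R * mu i * hterm k y * (- (eps * (i == k)%:R / rho k) / hbase i k).
  have move_j j : mu i * P i j * ((nonneg (y + (uvec j - uvec i)))%:R
        * (hterm k (y + (uvec j - uvec i)) - hterm k y))
      = ((0 < y i)%R : bool)%:R * mu i * hterm k y * (P i j * (hbase j k / hbase i k - 1)).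
    case: (eqVneq j i) => [->|ji]; first by rewrite P_diag0; ring.
    by rewrite nonneg_move_uvec // hterm_shift prod_hbase_uvecB; ring.
  under eq_bigr => j _ do rewrite move_j.
  by rewrite -departure_hbase nonneg_sub_uvec // hterm_shift prod_hbase_uvecN -mulr_sumr; ring.
rewrite -addrA -big_split /= (eq_bigr _ (fun i _ => departures i)) arrivals.
rewrite (bigD1 k) //= big1 ?addr0 => [|i /negbTE ->]; last by rewrite mulr0 mul0r oppr0 mul0r mulr0.
rewrite /hterm_rate /interior_rate; case: (0 < y k); last by rewrite /= !mul0r addr0.
have rho_neq0 := gt_eqF (rho_gt0 k).
have := gt_eqF (hbase_gt0 k k); rewrite /hbase eqxx => hkk_neq0.
have rhoG_neq0 : rho k + eps * G k k != 0.
  by rewrite gt_eqF // ltr_pwDl ?rho_gt0 // mulr_ge0 ?Gmat_ge0 // ltW.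
by rewrite /=; field; rewrite rho_neq0 rhoG_neq0.
Qed.

Lemma gen_h y : nonneg y -> gen lam mu P h y = \sum_k hterm k y * hterm_rate k y.
Proof. by move=> y_ge0; rewrite gen_sum; apply: eq_bigr => k _; rewrite gen_hterm. Qed.

Lemma hterm_gt0 k y : 0 < hterm k y.
Proof. by apply: prodr_gt0 => j _; apply: exprz_gt0; exact: hbase_gt0. Qed.

Lemma hterm_le_h k y : hterm k y <= h y.
Proof. by rewrite h_funE; apply: sumr_ge_term => j; exact: ltW (hterm_gt0 j y). Qed.

Lemma h_gt0 (i : 'I_d) y : 0 < h y.
Proof. exact: lt_le_trans (hterm_gt0 i y) (hterm_le_h i y). Qed.

Lemma htermE k y : nonneg y -> hterm k y = \prod_j hbase j k ^+ `|y j|%N.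
Proof. by move/forallP=> y_ge0; apply: eq_bigr => j _; rewrite exprnP gez0_abs. Qed.

Definition hbase_floor : R := 1 + eps / \sum_l rho l.

Lemma hbase_floor_gt1 (i : 'I_d) : 1 < hbase_floor.
Proof.
rewrite ltrDl divr_gt0 //; apply: lt_le_trans (rho_gt0 i) (sumr_ge_term i _) => j.
exact: ltW (rho_gt0 j).
Qed.

Lemma hbase_floor_le_diag l : hbase_floor <= hbase l l.
Proof.
have rho_le_sum : rho l <= \sum_l rho l by apply: sumr_ge_term => j; exact: ltW (rho_gt0 j).
have sum_gt0 : 0 < \sum_l rho l := lt_le_trans (rho_gt0 l) rho_le_sum.
rewrite /hbase_floor /hbase lerD2l -mulrA ler_pM2l //.
apply: le_trans (_ : (rho l)^-1 <= _); first by rewrite lef_pV2 ?posrE ?rho_gt0.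
by rewrite ler_pdivlMr ?rho_gt0 // mulVf ?gt_eqF ?rho_gt0 // Gmat_diag_ge1.
Qed.

Lemma h_pow_ge y : nonneg y -> hbase_floor ^+ norm1 y <= h y ^+ d.
Proof.
move=> y_ge0; rewrite -[d in h y ^+ d]card_ord -prodr_const /norm1 -prodrXr.
apply: ler_prod => l _; have floor_ge0 := ltW (lt_trans ltr01 (hbase_floor_gt1 l)).
rewrite exprn_ge0 //=; apply: le_trans (hterm_le_h l y); rewrite htermE // (bigD1 l) //=.
have floor_le : hbase_floor ^+ `|y l| <= hbase l l ^+ `|y l|.
  by rewrite lerXn2r ?nnegrE ?hbase_floor_le_diag //; exact: ltW (hbase_gt0 l l).
apply: le_trans floor_le (ler_peMr _ _); first exact: exprn_ge0 (ltW (hbase_gt0 l l)).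
apply: (big_ind (fun x => 1 <= x)) => // [x z|j _]; first exact: mulr_ege1.
exact: exprn_ege1 (hbase_ge1 j l).
Qed.

Definition hbase_sum : R := \sum_l \sum_k hbase l k.

Lemma hbase_le_sum l k : hbase l k <= hbase_sum.
Proof.
have hbase_ge0 l' k' : 0 <= hbase l' k' := ltW (hbase_gt0 l' k').
apply: le_trans (sumr_ge_term l (F := fun l => \sum_k hbase l k) _) => [|l'].
  exact: sumr_ge_term.
exact: sumr_ge0.
Qed.

Definition upstream (i l : 'I_d) : bool := (l != i) && (0 < G l i).

Definition upstream_load (i : 'I_d) (y : Zvec d) : nat :=
  (\sum_l (if upstream i l then `|y l| else 0))%N.

Lemma hbase_not_upstream i l : ~~ upstream i l -> l != i -> hbase l i = 1.
Proof.
rewrite /upstream => /nandP[/negPn/eqP->|]; first by rewrite eqxx.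
rewrite -leNgt => Gli_le0 _; have Gli0 : G l i = 0 by apply/le_anti; rewrite Gli_le0 Gmat_ge0.
by rewrite /hbase Gli0 mulr0 mul0r addr0.
Qed.

Lemma hterm_face_le_hbase_sum i y : nonneg y -> y i = 0 ->
  hterm i y <= hbase_sum ^+ upstream_load i y.
Proof.
move=> y_ge0 yi0; rewrite htermE // /upstream_load -prodrXr; apply: ler_prod => l _.
rewrite exprn_ge0 /=; last exact: ltW (hbase_gt0 l i).
case: ifP => [up|/negbT not_up].
  apply: lerXn2r; rewrite ?nnegrE ?hbase_le_sum //; first exact: ltW (hbase_gt0 l i).
  exact: le_trans (ltW (hbase_gt0 l i)) (hbase_le_sum l i).
case: (eqVneq l i) => [->|li]; first by rewrite yi0.
by rewrite hbase_not_upstream // expr1n.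
Qed.

Lemma hbase_ratio_lt_parent i p : 0 < P p i ->
  exists t, [/\ 0 <= t, t < 1 & forall l, upstream i l -> hbase l i <= t * hbase l p].
Proof.
move=> Ppi_gt0; apply: (ex_uniform_ratio i) => [l|l|l /andP[li Gli_gt0]].
- exact: ltW (hbase_gt0 l i).
- exact: hbase_gt0 l p.
have [p' Pp'i_gt0 ratio_lt] := Gmat_ratio_lt_parent li Gli_gt0.
by rewrite -(branching Pp'i_gt0 Ppi_gt0) /hbase ltrD2l -!mulrA ltr_pM2l.
Qed.

Lemma hterm_face_le_parent i p t y : nonneg y -> y i = 0 -> 0 <= t ->
  (forall l, upstream i l -> hbase l i <= t * hbase l p) ->
  hterm i y <= t ^+ upstream_load i y * hterm p y.
Proof.
move=> y_ge0 yi0 t_ge0 hbase_le.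
rewrite !htermE // /upstream_load -prodrXr -big_split /=; apply: ler_prod => l _.
rewrite exprn_ge0 /=; last exact: ltW (hbase_gt0 l i).
case: ifP => [up|/negbT not_up].
  rewrite -exprMn lerXn2r ?nnegrE ?hbase_le //; first exact: ltW (hbase_gt0 l i).
  by rewrite mulr_ge0 //; exact: ltW (hbase_gt0 l p).
rewrite expr0 mul1r; case: (eqVneq l i) => [->|li]; first by rewrite yi0 !expr0.
by rewrite hbase_not_upstream // expr1n exprn_ege1 ?hbase_ge1.
Qed.

(* With many customers upstream of [i], [hterm i] is exponentially smaller than
   the term of the parent of [i]; with few, [hterm i] stays bounded while [h]
   grows exponentially in [norm1 y]. *)
Lemma hterm_face_negligible i e : 0 < e -> \forall N \near \oo,
  forall y, nonneg y -> y i = 0 -> (N <= norm1 y)%N -> hterm i y <= e * h y.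
Proof.
move=> e_gt0.
have [K load_large] : exists K, forall y, nonneg y -> y i = 0 ->
    (K <= upstream_load i y)%N -> hterm i y <= e * h y.
  case: (pickP (fun m => 0 < P m i)) => [p Ppi_gt0|i_orphan]; last first.
    exists 1%N => y _ _; rewrite /upstream_load big1 // => l _.
    case: ifP => // /andP[li]; rewrite Gmat_orphan ?ltxx // => m.
    by rewrite i_orphan.
  have [t [t_ge0 t_lt1 hbase_le]] := hbase_ratio_lt_parent Ppi_gt0.
  have [|K _ tK] := @expr_near_le _ t e _ e_gt0; first by rewrite ger0_norm.
  exists K => y y_ge0 yi0 K_le.
  apply: le_trans (hterm_face_le_parent y_ge0 yi0 t_ge0 hbase_le) _.
  apply: ler_pM; [exact: exprn_ge0 | exact: ltW (hterm_gt0 p y) | | exact: hterm_le_h].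
  exact: tK.
have d_gt0 : (0 < d)%N := leq_ltn_trans (leq0n i) (ltn_ord i).
have hbase_sum_ge1 : 1 <= hbase_sum := le_trans (hbase_ge1 i i) (hbase_le_sum i i).
have floor_ge1 := ltW (hbase_floor_gt1 i).
near=> N => y y_ge0 yi0 N_le.
case: (leqP K (upstream_load i y)) => [|load_lt]; first exact: load_large.
have hterm_bounded : hterm i y <= hbase_sum ^+ K.
  exact: le_trans (hterm_face_le_hbase_sum y_ge0 yi0) (ler_weXn2l hbase_sum_ge1 (ltnW load_lt)).
suff : hbase_sum ^+ K / e <= h y.
  by rewrite ler_pdivrMr // mulrC => /(le_trans hterm_bounded).
rewrite -(ler_pXn2r d_gt0) ?nnegrE; last exact: ltW (h_gt0 i y).
  apply: le_trans (h_pow_ge y_ge0); apply: le_trans (ler_weXn2l floor_ge1 N_le).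
  by near: N; exact: exprn_near_ge (hbase_floor_gt1 i).
by apply: divr_ge0; [exact: exprn_ge0 (le_trans ler01 hbase_sum_ge1) | exact: ltW].
Unshelve. all: by end_near. Qed.

Lemma gen_h_ratio_le (i0 : 'I_d) M e : (forall k, interior_rate k <= M) -> 0 < e ->
  exists N, forall y, nonneg y -> (N <= norm1 y)%N -> gen lam mu P h y / h y <= M + e.
Proof.
move=> rate_le e_gt0.
have d_gt0 : 0 < d%:R :> R by rewrite ltr0n (leq_ltn_trans (leq0n i0) (ltn_ord i0)).
set e' := e / d%:R; have e'_gt0 : 0 < e' by rewrite divr_gt0.
have : \forall N \near \oo, forall k y, nonneg y -> (N <= norm1 y)%N ->
    hterm k y * (hterm_rate k y - M) <= e' * h y.
  apply: filter_forall => k.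
  set c := `|face_rate k - M| + 1; have c_gt0 : 0 < c by rewrite ltr_pwDr.
  have face_k := hterm_face_negligible k (divr_gt0 e'_gt0 c_gt0).
  near=> N => y y_ge0 Ny; rewrite /hterm_rate; case: ifP => [_|yk_le0].
    apply: le_trans (_ : 0 <= _); last by rewrite mulr_ge0 // ltW // (h_gt0 i0).
    apply: mulr_ge0_le0; first exact: ltW (hterm_gt0 k y).
    by rewrite subr_le0 rate_le.
  have yk0 : y k = 0.
    by move/forallP: y_ge0 => /(_ k); rewrite le_eqVlt yk_le0 orbF => /eqP.
  have : hterm k y <= e' / c * h y.
    by clear yk_le0; move: y y_ge0 yk0 Ny; near: N; exact: face_k.
  rewrite mulrAC ler_pdivlMr // => hk_le.
  apply: le_trans hk_le; apply: ler_wpM2l; first exact: ltW (hterm_gt0 k y).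
  by rewrite (le_trans (ler_norm _)) // lerDl.
move=> [N _ rate_avg]; exists N => y y_ge0 Ny.
rewrite ler_pdivrMr ?(h_gt0 i0) // gen_h // h_funE.
apply: le_trans (sum_mul_le_avg (fun k => rate_avg N (leqnn N) k y y_ge0 Ny)) _.
by rewrite card_ord /e' [d%:R * _]mulrC divfK ?gt_eqF.
Unshelve. all: by end_near. Qed.

Lemma hbase_ratio_lt_diag j :
  exists t, [/\ 0 <= t, t < 1 & forall l, l != j -> hbase j l <= t * hbase j j].
Proof.
apply: (ex_uniform_ratio j) => [l|_|l lj]; first exact: ltW (hbase_gt0 j l).
  exact: (hbase_gt0 j j).
by rewrite /hbase ltrD2l -!mulrA ltr_pM2l // Gmat_ratio_lt_diag.
Qed.

Lemma hterm_axis k j n : hterm k (axis j n) = hbase j k ^+ n.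
Proof.
rewrite htermE ?nonneg_axis // (bigD1 j) //= big1 ?mulr1 => [|l /axis_off -> //].
by rewrite ffunE eqxx.
Qed.

Lemma gen_h_ratio_ge j e N : 0 < e ->
  exists y, [/\ nonneg y, (N <= norm1 y)%N & interior_rate j - e <= gen lam mu P h y / h y].
Proof.
move=> e_gt0.
have d_gt0 : 0 < d%:R :> R by rewrite ltr0n (leq_ltn_trans (leq0n j) (ltn_ord j)).
set e' := e / d%:R; have e'_gt0 : 0 < e' by rewrite divr_gt0.
have [t [t_ge0 t_lt1 hbase_le]] := hbase_ratio_lt_diag j.
have : \forall n \near \oo, forall k, t ^+ n * (`|face_rate k - interior_rate j| + 1) <= e'.
  apply: filter_forall => k; near=> n; rewrite -ler_pdivlMr ?ltr_pwDr //.
  by near: n; apply: expr_near_le; [rewrite ger0_norm | rewrite divr_gt0 // ltr_pwDr].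
move=> [n0 _ tn_small]; set n := maxn n0 N.+1; set y := axis j n.
have y_ge0 : nonneg y := nonneg_axis j n.
exists y; split => //; first by rewrite norm1_axis (leq_trans (leqnSn N) (leq_maxr _ _)).
rewrite ler_pdivlMr ?(h_gt0 j) // gen_h // h_funE.
apply: le_trans (avg_le_sum_mul (m := interior_rate j) (e := e') _).
  by rewrite card_ord /e' [d%:R * _]mulrC divfK ?gt_eqF.
move=> k; case: (eqVneq k j) => [->|kj].
  have yj_gt0 : 0 < y j by rewrite ffunE eqxx ltz_nat (leq_trans _ (leq_maxr n0 N.+1)).
  rewrite /hterm_rate yj_gt0 subrr mulr0 oppr_le0.
  by apply: mulr_ge0; [exact: ltW | apply: sumr_ge0 => l _; exact: ltW (hterm_gt0 l y)].
rewrite /hterm_rate axis_off // ltxx.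
set c := `|face_rate k - interior_rate j| + 1; have c_gt0 : 0 < c by rewrite ltr_pwDr.
have hk_le : hterm k y <= t ^+ n * hterm j y.
  rewrite !hterm_axis -exprMn lerXn2r ?nnegrE ?hbase_le //; first exact: ltW (hbase_gt0 j k).
  by rewrite mulr_ge0 //; exact: ltW (hbase_gt0 j j).
have hkc_le : hterm k y * c <= e' * \sum_l hterm l y.
  apply: le_trans (_ : t ^+ n * hterm j y * c <= _); first by rewrite ler_wpM2r // ltW.
  rewrite mulrAC; apply: ler_pM.
  - by rewrite mulr_ge0 ?exprn_ge0 // ltW.
  - exact: ltW (hterm_gt0 j y).
  - exact: tn_small (leq_maxl _ _) k.
  - by rewrite -h_funE hterm_le_h.
have : hterm k y * (- c) <= hterm k y * (face_rate k - interior_rate j).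
  apply: ler_wpM2l; first exact: ltW (hterm_gt0 k y).
  by have := ler_norm (- (face_rate k - interior_rate j)); rewrite normrN /c; lra.
lra.
Unshelve. all: by end_near. Qed.

Hypothesis lam_ge0 : forall i, 0 <= lam i.

Lemma interior_rate_lt0 j : eps < rho j / G j j * (mu j / nu j - 1) -> interior_rate j < 0.
Proof.
move=> eps_lt.
have rho_gt0j := rho_gt0 j; have Gjj_gt0 := lt_le_trans ltr01 (Gmat_diag_ge1 j).
have nu_ge0 : 0 <= nu j.
  rewrite nu_Gmat sumr_ge0 // => i _.
  by rewrite mulr_ge0 ?Gmat_ge0.
have [nu0|nu_neq0] := eqVneq (nu j) 0.
  (* then [mu j / nu j = 0] and the bound on [eps] is contradictory *)
  move: eps_lt; rewrite nu0 invr0 mulr0 sub0r mulrN1 => eps_lt.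
  have rG_gt0 : 0 < rho j / G j j by rewrite divr_gt0.
  by have := lt_trans eps_gt0 eps_lt; rewrite oppr_gt0 ltNge ltW.
have nu_gt0 : 0 < nu j by rewrite lt_def nu_neq0.
have rhoG_gt0 : 0 < rho j + eps * G j j by rewrite ltr_pwDl // mulr_ge0 // ltW.
have : eps * (G j j * nu j) < rho j * (mu j - nu j).
  move: eps_lt; rewrite -ltr_pdivlMr ?mulr_gt0 //.
  by congr (_ < _); field; rewrite !gt_eqF.
have -> : interior_rate j
    = eps * (nu j * (rho j + eps * G j j) - mu j * rho j) / (rho j * (rho j + eps * G j j)).
  by rewrite /interior_rate /face_rate; field; rewrite !gt_eqF.
rewrite pmulr_llt0 ?invr_gt0 ?mulr_gt0 // pmulr_rlt0 //; lra.
Qed.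

Lemma limsup_gen_h_ratio j : (forall k, interior_rate k <= interior_rate j) ->
  limsup_infty (fun x => gen lam mu P h x / h x) = (interior_rate j)%:E.
Proof.
move=> rate_le; apply: limsup_infty_eq => e e_gt0; first exact: gen_h_ratio_le j _ _ rate_le e_gt0.
by move=> N; exact: gen_h_ratio_ge.
Qed.
End Jackson.

Theorem corollary3p1 (R : realType) (d : nat) (lam mu : 'I_d -> R)
  (P : 'M[R]_d) (nu rho : 'I_d -> R) (eps : R) :
  (0 < d)%N ->
  (forall i, 0 <= lam i) ->
  (forall i, 0 < mu i) ->
  (forall i j, 0 <= P i j) ->
  (forall i, P i i = 0) ->
  (forall i, \sum_(j < d) P i j <= 1) ->
  (* (A) *)
  irreducibleA lam mu P ->
  (* nu solves the traffic equations *)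
  (forall j, nu j = lam j + \sum_(i < d) nu i * P i j) ->
  (* (B) *)
  (forall i, nu i < mu i) ->
  (* branching structure *)
  (forall i j k, 0 < P j i -> 0 < P k i -> j = k) ->
  (forall i, \sum_(j < d) rho j * P j i < rho i) ->
  0 < eps ->
  (eps%:E < emin (fun i => (rho i / Gmat P i i * (mu i / nu i - 1))%R))%E ->
  limsup_infty (fun x => gen lam mu P (h_fun (Gmat P) eps rho) x
                          / h_fun (Gmat P) eps rho x)
    = (- (eps%:E * emin (fun i => (mu i / (rho i + eps * Gmat P i i) - nu i / rho i)%R)))%E
  /\ (- (eps%:E * emin (fun i => (mu i / (rho i + eps * Gmat P i i) - nu i / rho i)%R)) < 0)%E.
Proof.
move=> d_gt0 lam_ge0 _ P_ge0 P_diag0 P_sum_le1 irrP nu_traffic _ branching rhoP_lt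
  eps_gt0 eps_lt.
set g := fun i => mu i / (rho i + eps * Gmat P i i) - nu i / rho i.
have rate_g k : interior_rate mu P rho nu eps k = - (eps * g k).
  by rewrite /interior_rate /face_rate /g; ring.
have [j g_min] := ex_argmin (Ordinal d_gt0) g.
rewrite (emin_argmin g_min) -EFinM -EFinN -rate_g lte_fin; split.
  apply: (limsup_gen_h_ratio P_ge0 P_sum_le1 irrP rhoP_lt branching P_diag0 nu_traffic eps_gt0).
  by move=> k; rewrite !rate_g lerN2; apply: ler_wpM2l; [exact: ltW | exact: g_min].
apply: (interior_rate_lt0 P_ge0 P_sum_le1 irrP rhoP_lt nu_traffic eps_gt0 lam_ge0).
by rewrite -lte_fin (lt_le_trans eps_lt) ?emin_le.
Qed.
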